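(* Let $R$ be a commutative ring with unit and let $S'\subset S\subset \mathbb{N}=\{1,2,\ldots\}$. Suppose that for each $n\in S$ there is a finite sequence $n'=n_0\Leftrightarrow_R n_1\Leftrightarrow_R\cdots\Leftrightarrow_R n_r=n$ ($r\ge 0$) of elements of $S$ with $n'\in S'$. Then the homomorphism $\rho^R_{S,S'}\colon R[q]^S\to R[q]^{S'}$ is injective. In particular, if $S\subset\mathbb{N}$ is $\Leftrightarrow_R$-connected, then for any nonempty subset $S'\subset S$ the homomorphism $\rho^R_{S,S'}$ is injective. More particularly, for any nonempty subset $S'\subset\mathbb{N}$ the homomorphism $\rho^{\mathbb{Z}}_{\mathbb{N},S'}\colon \mathbb{Z}[q]^{\mathbb{N}}\to\mathbb{Z}[q]^{S'}$ is injective.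
   Context: All rings are commutative with unit; $q$ is an indeterminate. For $n\in\mathbb{N}$, $\Phi_n(q)\in\mathbb{Z}[q]$ is the $n$th cyclotomic polynomial. For $S\subset\mathbb{N}$, let $\Phi_S^*$ be the multiplicative subset of $\mathbb{Z}[q]$ generated by $\{\Phi_n(q): n\in S\}$, viewed as a directed set under divisibility, and define the cyclotomic completion $R[q]^S=\varprojlim_{f\in\Phi_S^*}R[q]/(f)$. For $S'\subset S$, $\rho^R_{S,S'}\colon R[q]^S\to R[q]^{S'}$ is the homomorphism induced by the identity of $R[q]$. A ring $R$ is $p$-adically separated if $\bigcap_{j\ge0}p^jR=(0)$. For $n,n'\in\mathbb{N}$ write $n\Leftrightarrow_R n'$ if either $n=n'$, or $n/n'$ is an integer power (positive or negative exponent) of a prime $p$ such that $R$ is $p$-adically separated, or $R=\{0\}$. A subset $S\subset\mathbb{N}$ is $\Leftrightarrow_R$-connected if it is nonempty and any two of its elements are joined by a finite chain of elements of $S$ consecutive ones of which are related by $\Leftrightarrow_R$. *)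

From HB Require Import structures.
From mathcomp Require Import all_boot all_order all_algebra.
From mathcomp Require Import cyclotomic.
Unset Implicit Arguments. Unset Printing Implicit Defensive.
Import Order.TTheory GRing.Theory Num.Theory.
Local Open Scope ring_scope.

Definition pdvd {R : comNzRingType} (f g : {poly R}) : Prop :=
  exists h : {poly R}, g = h * f.

Definition polyZR (R : comNzRingType) (f : {poly int}) : {poly R} :=
  map_poly (fun z : int => z%:~R) f.

Definition PhiS (S : nat -> Prop) (f : {poly int}) : Prop :=
  exists s : seq nat, (forall n, n \in s -> S n) /\ f = \prod_(n <- s) 'Phi_n.

(* An element of R[q]^S = lim_{f in Phi_S^*} R[q]/(f), given by a choice of
   representatives x f in R[q] of its components in R[q]/(f), compatible with
   the transition maps R[q]/(g) -> R[q]/(f) for f | g (divisibility in Z[q]). *)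
Definition cyc_elt (R : comNzRingType) (S : nat -> Prop)
    (x : {poly int} -> {poly R}) : Prop :=
  forall f g, PhiS S f -> PhiS S g -> pdvd f g ->
    pdvd (polyZR R f) (x g - x f).

Definition cyc_eq (R : comNzRingType) (S : nat -> Prop)
    (x y : {poly int} -> {poly R}) : Prop :=
  forall f, PhiS S f -> pdvd (polyZR R f) (x f - y f).

(* rho^R_{S,S'} sends (x_f)_{f in Phi_S^*} to (x_f)_{f in Phi_S'^*}, i.e. the
   same representatives restricted; injectivity of rho^R_{S,S'}: *)
Definition rho_injective (R : comNzRingType) (S S' : nat -> Prop) : Prop :=
  forall x y : {poly int} -> {poly R},
    cyc_elt R S x -> cyc_elt R S y -> cyc_eq R S' x y -> cyc_eq R S x y.

Definition padic_separated (R : comNzRingType) (p : nat) : Prop :=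
  forall r : R, (forall j : nat, exists s : R, r = (p ^ j)%N%:R * s) -> r = 0.

(* n <=>_R n'  (R is nonzero here, so the clause R = {0} is vacuous). *)
Definition equivR (R : comNzRingType) (n n' : nat) : Prop :=
  n = n' \/
  exists p k : nat, prime p /\ padic_separated R p /\
    (n = (n' * p ^ k)%N \/ n' = (n * p ^ k)%N).

Definition chain_in (R : comNzRingType) (S : nat -> Prop) (a b : nat) : Prop :=
  exists (r : nat) (ns : nat -> nat),
    ns 0%N = a /\ ns r = b /\ (forall i, (i <= r)%N -> S (ns i)) /\
    (forall i, (i < r)%N -> equivR R (ns i) (ns i.+1)).

Definition connectedR (R : comNzRingType) (S : nat -> Prop) : Prop :=
  (exists n, S n) /\ forall a b, S a -> S b -> chain_in R S a b.

(* Put z = x - y and call A ⊆ S vanishing if z_f ∈ (f) for every f ∈ Φ_A^*;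
   S' is vanishing.  Let n ∈ A and n ⇔_R m through a prime p.  Since
   Φ_n(q^p) is Φ_np or Φ_np Φ_n according as p | n or not, and Φ_n(q^p) ≡ Φ_n^p
   mod p, Φ_np is congruent mod p to a positive power of Φ_n; hence Φ_m divides
   a power of Φ_n mod p, i.e. Φ_n^c = u Φ_m + p v in Z[q].  Raising this to the
   power b + j shows that for f = g Φ_m^b with g ∈ Φ_A^*, compatibility of z
   puts z_f in (f) + p^j R[q] for every j; f is monic and R is p-adically
   separated, so z_f ∈ (f).  Thus A ∪ {m} is vanishing, and following the
   chains from S' makes all of S vanishing. *)

From HB Require Import structures.
From mathcomp Require Import all_boot all_order all_algebra.
From mathcomp Require Import cyclotomic algC ring.
Set Implicit Arguments. Unset Strict Implicit. Unset Printing Implicit Defensive.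
Import Order.TTheory GRing.Theory Num.Theory.
Local Open Scope ring_scope.

Lemma totient_mulp_dvd p n : prime p -> (p %| n)%N ->
  totient (n * p) = (totient n * p)%N.
Proof.
move=> p_pr p_n; have [->|n_gt0] := posnP n; first by [].
have k_gt0 : (0 < logn p n)%N by rewrite logn_gt0 mem_primes p_pr n_gt0.
set k := logn p n in k_gt0; have [m co_pm Dn] := pfactor_coprime p_pr n_gt0.
have co_m e : coprime m (p ^ e) by rewrite coprimeXr // coprime_sym.
rewrite Dn -/k -mulnA -expnSr !totient_coprime // !totient_pfactor //.
by case: k k_gt0 => // k _; rewrite expnS /=; ring.
Qed.

Lemma totient_mulp_coprime p n : prime p -> ~~ (p %| n)%N ->
  totient (n * p) = (totient n * p.-1)%N.
Proof.
move=> p_pr p_n; rewrite totient_coprime 1?(totient_prime p_pr) //.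
by rewrite coprime_sym prime_coprime.
Qed.

Local Notation Cpoly := (map_poly (intr : int -> algC)).

Lemma Cyclotomic_prim_roots n : (0 < n)%N -> exists2 rs : seq algC,
  Cpoly 'Phi_n = \prod_(x <- rs) ('X - x%:P) &
  uniq rs /\ forall x, (x \in rs) = n.-primitive_root x.
Proof.
move=> n_gt0; have [z z_prim] := C_prim_root_exists n_gt0.
set rs := [seq z ^+ i | i : 'I_n in [pred i : 'I_n | coprime i n]].
have Phi_rs : Cpoly 'Phi_n = \prod_(x <- rs) ('X - x%:P).
  by rewrite (Cintr_Cyclotomic z_prim) /cyclotomic big_image.
exists rs => //; split.
  rewrite map_inj_in_uniq ?enum_uniq // => i j _ _ /eqP.
  by rewrite (eq_prim_root_expr z_prim) !modn_small // => /eqP/val_inj.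
move=> x; rewrite -(root_cyclotomic z_prim) -(Cintr_Cyclotomic z_prim).
by rewrite Phi_rs root_prod_XsubC.
Qed.

Lemma Cpoly_monic_eq (A B : {poly int}) : A \is monic -> B \is monic ->
  size A = size B -> Cpoly B %| Cpoly A -> A = B.
Proof.
move=> mA mB sAB dvBA; apply: (map_inj_poly (@intr_inj algC)) => //.
apply/eqP; rewrite -eqp_monic ?monic_map // eqp_sym -dvdp_size_eqp //.
by rewrite !size_map_inj_poly ?sAB //; apply: intr_inj.
Qed.

Lemma root_comp_Xn (P : {poly int}) k (w : algC) :
  root (Cpoly (P \Po 'X^k)) w = root (Cpoly P) (w ^+ k).
Proof. by rewrite map_comp_poly map_polyXn /root horner_comp hornerXn. Qed.

Lemma comp_Xn_monic k (A : {poly int}) : (0 < k)%N -> A \is monic ->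
  (A \Po 'X^k) \is monic /\ size (A \Po 'X^k) = ((size A).-1 * k).+1.
Proof.
move=> k_gt0 mA; have sX : (1 < size ('X^k : {poly int}))%N by rewrite size_polyXn.
have mAX : (A \Po 'X^k) \is monic.
  by rewrite monicE lead_coef_comp // (monicP mA) lead_coefXn expr1n mulr1.
by split=> //; rewrite (polySpred (monic_neq0 mAX)) size_comp_poly size_polyXn.
Qed.

Lemma root_Cyclotomic n (x : algC) : (0 < n)%N ->
  root (Cpoly 'Phi_n) x = n.-primitive_root x.
Proof.
by move=> /Cyclotomic_prim_roots[rs -> [_ rs_prim]]; rewrite root_prod_XsubC rs_prim.
Qed.

Lemma exp_prim_root_mulp n p (x : algC) : (0 < p)%N ->
  (n * p).-primitive_root x -> n.-primitive_root (x ^+ p).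
Proof. by move=> p_gt0 /exp_prim_root/(_ p); rewrite gcdnMl mulnK. Qed.

Lemma Cyclotomic_comp_Xp_dvd p n : prime p -> (p %| n)%N ->
  'Phi_n \Po 'X^p = 'Phi_(n * p).
Proof.
move=> p_pr p_n; have p_gt0 := prime_gt0 p_pr.
have [->|n_gt0] := posnP n; first by rewrite mul0n Cyclotomic0 -polyC1 comp_polyC.
have np_gt0 : (0 < n * p)%N by rewrite muln_gt0 n_gt0.
have [mA sA] := comp_Xn_monic p_gt0 (Cyclotomic_monic n).
apply: Cpoly_monic_eq mA (Cyclotomic_monic _) _ _.
  by rewrite sA !size_Cyclotomic totient_mulp_dvd.
have [rs -> [rs_uniq rs_prim]] := Cyclotomic_prim_roots np_gt0.
apply: uniq_roots_dvdp; last by rewrite uniq_rootsE.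
apply/allP => x; rewrite rs_prim root_comp_Xn root_Cyclotomic //.
exact: exp_prim_root_mulp.
Qed.

Lemma Cyclotomic_comp_Xp_coprime p n : prime p -> ~~ (p %| n)%N ->
  'Phi_n \Po 'X^p = 'Phi_(n * p) * 'Phi_n.
Proof.
move=> p_pr p_n; have p_gt1 := prime_gt1 p_pr; have p_gt0 := ltnW p_gt1.
have n_gt0 : (0 < n)%N by case: n p_n => //; rewrite dvdn0.
have np_gt0 : (0 < n * p)%N by rewrite muln_gt0 n_gt0.
have [mA sA] := comp_Xn_monic p_gt0 (Cyclotomic_monic n).
have mB : 'Phi_(n * p) * 'Phi_n \is monic by rewrite monicMl Cyclotomic_monic.
apply: Cpoly_monic_eq mA mB _ _.
  rewrite sA size_mul ?monic_neq0 ?Cyclotomic_monic // !size_Cyclotomic.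
  by rewrite totient_mulp_coprime //= addnS -mulnSr prednK.
rewrite rmorphM /=.
have [rs1 -> [rs1_uniq rs1_prim]] := Cyclotomic_prim_roots np_gt0.
have [rs2 -> [rs2_uniq rs2_prim]] := Cyclotomic_prim_roots n_gt0.
rewrite -big_cat; apply: uniq_roots_dvdp; last first.
  rewrite uniq_rootsE cat_uniq rs1_uniq rs2_uniq andbT.
  apply/hasPn => x; rewrite rs2_prim rs1_prim => x_n; apply/negP => x_np.
  have := prim_order_dvd x_np n; rewrite prim_expr_order // eqxx.
  by move/(dvdn_leq n_gt0); rewrite leqNgt ltn_Pmulr.
apply/allP => x; rewrite root_comp_Xn root_Cyclotomic //.
rewrite mem_cat rs1_prim rs2_prim; case/orP=> [/(exp_prim_root_mulp p_gt0) //|x_n].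
by rewrite prim_root_exp_coprime // prime_coprime.
Qed.

Local Notation Fpoly p := (map_poly (intr : int -> 'F_p)).

Lemma Fpoly_comp_Xp p (A : {poly int}) : prime p ->
  Fpoly p (A \Po 'X^p) = Fpoly p A ^+ p.
Proof.
move=> p_pr; have pchar_p : p \in [pchar {poly 'F_p}].
  by rewrite pchar_poly pchar_Fp.
rewrite map_comp_poly map_polyXn comp_polyE; set B := map_poly _ A.
rewrite -[B in RHS]coefK poly_def -[in RHS](pFrobenius_autE pchar_p).
rewrite rmorph_sum /=; apply: eq_bigr => i _.
rewrite -!mul_polyC rmorphM /= !pFrobenius_autE -polyC_exp coef_map /=.
rewrite -(pFrobenius_autE (pchar_Fp p_pr)) pFrobenius_aut_int.
by rewrite exprAC mul_polyC.
Qed.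

Lemma Fpoly_Cyclotomic_neq0 p n : Fpoly p 'Phi_n != 0.
Proof. by rewrite monic_neq0 // monic_map // Cyclotomic_monic. Qed.

Lemma Cyclotomic_mulp_modp p n : prime p ->
  exists2 e, (0 < e)%N & Fpoly p 'Phi_(n * p) = Fpoly p 'Phi_n ^+ e.
Proof.
move=> p_pr; have p_gt1 := prime_gt1 p_pr.
have [p_n|p_n] := boolP (p %| n)%N.
  exists p; first exact: ltnW.
  by rewrite -Cyclotomic_comp_Xp_dvd // Fpoly_comp_Xp.
exists p.-1; first by rewrite -ltnS prednK // ltnW.
apply: (mulIf (Fpoly_Cyclotomic_neq0 p n)).
have -> : Fpoly p 'Phi_n ^+ p.-1 * Fpoly p 'Phi_n = Fpoly p 'Phi_n ^+ p.
  by rewrite -exprSr prednK // ltnW.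
by rewrite -Fpoly_comp_Xp // Cyclotomic_comp_Xp_coprime // rmorphM.
Qed.

Lemma Cyclotomic_mulpX_modp p n k : prime p ->
  exists2 e, (0 < e)%N & Fpoly p 'Phi_(n * p ^ k) = Fpoly p 'Phi_n ^+ e.
Proof.
move=> p_pr; elim: k => [|k [e e_gt0 IHk]]; first by exists 1%N; rewrite ?muln1.
have [e' e'_gt0 Ee'] := Cyclotomic_mulp_modp (n * p ^ k) p_pr.
by exists (e * e')%N; rewrite ?muln_gt0 ?e_gt0 // expnSr mulnA Ee' IHk exprM.
Qed.

Lemma Fpoly_ker p (A : {poly int}) : prime p -> Fpoly p A = 0 ->
  exists B, A = p%:R * B.
Proof.
move=> p_pr A0; have p_A i : (p%:Z %| A`_i)%Z.
  rewrite (dvdz_pcharf (pchar_Fp p_pr)); apply/eqP.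
  by move/(congr1 (coefp i)): A0; rewrite /= coef_map coef0.
exists (map_poly (fun a => (a %/ p%:Z)%Z) A); apply/polyP => i.
by rewrite -polyC_natr coefCM coef_map_id0 ?div0z // mulrC natz divzK.
Qed.

Lemma Fpoly_dvdp_lift p (A B : {poly int}) : prime p ->
  Fpoly p B %| Fpoly p A -> exists u v, A = u * B + p%:R * v.
Proof.
move=> p_pr /dvdpP[w Ew].
pose u := map_poly (fun a : 'F_p => (a : nat)%:Z) w.
have Eu : Fpoly p u = w.
  by rewrite -map_poly_comp map_poly_id // => a _ /=; apply: natr_Zp.
have [v Ev] : exists v, A - u * B = p%:R * v.
  by apply: Fpoly_ker; rewrite // rmorphB rmorphM /= Eu Ew subrr.
by exists u, v; rewrite -Ev addrC subrK.
Qed.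

Lemma Cyclotomic_pow_in_ideal p a b k : prime p ->
  (a = b * p ^ k \/ b = a * p ^ k)%N ->
  exists c u v, 'Phi_a ^+ c = u * 'Phi_b + p%:R * v.
Proof.
move=> p_pr Eab.
have [c Phi_dvd] : exists c, Fpoly p 'Phi_b %| Fpoly p 'Phi_a ^+ c.
  case: Eab => [->|->].
    have [e e_gt0 ->] := Cyclotomic_mulpX_modp b k p_pr.
    by exists 1%N; rewrite expr1 dvdp_exp.
  have [e _ ->] := Cyclotomic_mulpX_modp a k p_pr.
  by exists e.
by exists c; apply: Fpoly_dvdp_lift; rewrite // rmorphXn.
Qed.

Lemma expr_in_ideal_powers (K : comNzRingType) (X Y P u v : K) :
  X = u * Y + P * v ->
  forall a b, exists s t, X ^+ (a + b) = s * Y ^+ a + t * P ^+ b.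
Proof.
move=> EX; elim=> [|a IHa] b.
  by exists (X ^+ b), 0; rewrite mulr1 mul0r addr0.
elim: b => [|b IHb]; first by exists 0, (X ^+ a.+1); rewrite addn0 mulr1 mul0r add0r.
have [s [t Est]] := IHa b.+1; have [s' [t' Est']] := IHb.
exists (u * s + P * v * s'), (u * t * Y + v * t').
rewrite addSn exprS {1}EX mulrDl {1}Est -addSnnS Est' !exprS; ring.
Qed.

Lemma padic_separated_dvd_monic (R : comNzRingType) p (M w : {poly R}) :
  M \is monic -> padic_separated R p ->
  (forall j, exists t v, w = t * M + (p ^ j)%N%:R * v) -> pdvd M w.
Proof.
move=> mM p_sep w_approx; have Ew := Pdiv.RingMonic.rdivp_eq mM w.
set r := Pdiv.Ring.rmodp w M in Ew.
suff r0 : r = 0 by exists (Pdiv.Ring.rdivp w M); rewrite {1}Ew r0 addr0.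
apply/polyP => i; rewrite coef0; apply: p_sep => j.
have [t [v Ew']] := w_approx j; exists (Pdiv.Ring.rmodp v M)`_i.
rewrite /r Ew' Pdiv.RingMonic.rmodpD // Pdiv.RingMonic.rmodp_mull // add0r.
by rewrite -polyC_natr mul_polyC Pdiv.RingMonic.rmodpZ // coefZ.
Qed.

Lemma PhiS1 (A : nat -> Prop) : PhiS A 1.
Proof. by exists [::]; rewrite big_nil. Qed.

Lemma PhiS_Cyclotomic (A : nat -> Prop) n : A n -> PhiS A 'Phi_n.
Proof.
by move=> An; exists [:: n]; rewrite big_seq1; split=> // k; rewrite inE => /eqP->.
Qed.

Lemma PhiS_mul (A : nat -> Prop) f g : PhiS A f -> PhiS A g -> PhiS A (f * g).
Proof.
move=> [s [sA ->]] [t [tA ->]]; exists (s ++ t); rewrite big_cat; split=> // n.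
by rewrite mem_cat => /orP[/sA|/tA].
Qed.

Lemma PhiS_expr (A : nat -> Prop) f k : PhiS A f -> PhiS A (f ^+ k).
Proof.
by move=> Af; elim: k => [|k IHk]; [apply: PhiS1 | rewrite exprS; apply: PhiS_mul].
Qed.

Lemma PhiS_sub (A B : nat -> Prop) f : (forall n, A n -> B n) -> PhiS A f -> PhiS B f.
Proof. by move=> AB [s [sA ->]]; exists s; split=> // n /sA/AB. Qed.

Lemma PhiS_monic (A : nat -> Prop) f : PhiS A f -> f \is monic.
Proof. by move=> [s [_ ->]]; apply: monic_prod => n _; apply: Cyclotomic_monic. Qed.

Lemma PhiS_adjoin (A : nat -> Prop) m g : PhiS (fun k => A k \/ k = m) g ->
  exists gA b, PhiS A gA /\ g = gA * 'Phi_m ^+ b.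
Proof.
move=> [s []]; elim: s g => [|n s IHs] g sAm ->.
  by exists 1, 0%N; rewrite big_nil expr0 mulr1; split=> //; apply: PhiS1.
rewrite big_cons; have [|gA [b [gA_A ->]]] := IHs _ _ erefl.
  by move=> k ks; apply: sAm; rewrite inE ks orbT.
case: (sAm n (mem_head n s)) => [An|->].
  exists ('Phi_n * gA), b; rewrite mulrA; split=> //.
  exact: PhiS_mul (PhiS_Cyclotomic An) gA_A.
by exists gA, b.+1; rewrite exprS; split=> //; ring.
Qed.

Lemma cyc_elt_sub (R : comNzRingType) (S : nat -> Prop) (x y : {poly int} -> {poly R}) :
  cyc_elt R S x -> cyc_elt R S y -> cyc_elt R S (fun f => x f - y f).
Proof.
move=> x_elt y_elt f g Sf Sg fg.
have [a Ea] := x_elt f g Sf Sg fg; have [b Eb] := y_elt f g Sf Sg fg.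
by exists (a - b); rewrite mulrBl -Ea -Eb; ring.
Qed.

Section VanishingCompatibleFamily.

Variables (R : comNzRingType) (S : nat -> Prop) (z : {poly int} -> {poly R}).
Hypothesis z_elt : cyc_elt R S z.

Definition vanishes_on (A : nat -> Prop) :=
  forall f, PhiS A f -> pdvd (polyZR R f) (z f).

Lemma vanishes_on_adjoin (A : nat -> Prop) n m p c u v :
  (forall k, A k -> S k) -> vanishes_on A -> A n -> S m -> padic_separated R p ->
  'Phi_n ^+ c = u * 'Phi_m + p%:R * v -> vanishes_on (fun k => A k \/ k = m).
Proof.
move=> AS zA An Sm p_sep Euv _ /PhiS_adjoin[gA [b [gA_A ->]]].
set g := gA * 'Phi_m ^+ b.
have Phi_mS k : PhiS S ('Phi_m ^+ k) by apply/PhiS_expr/PhiS_Cyclotomic.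
have gS : PhiS S g by apply: PhiS_mul (PhiS_sub AS gA_A) (Phi_mS b).
apply: (padic_separated_dvd_monic (p := p)) => //.
  by rewrite monic_map // (PhiS_monic gS).
move=> j; have [s [t Est]] := expr_in_ideal_powers Euv b j.
set F := gA * ('Phi_n ^+ c) ^+ (b + j).
have FA : PhiS A F by apply/(PhiS_mul gA_A)/PhiS_expr/PhiS_expr/PhiS_Cyclotomic.
have FS : PhiS S F by apply: PhiS_sub FA.
(* G is a common multiple of g and F, so z_g is congruent to 0 modulo (g) + (F). *)
set G := F * 'Phi_m ^+ b.
have GS : PhiS S G by apply: PhiS_mul FS (Phi_mS b).
have [a1 e1] : pdvd (polyZR R g) (z G - z g).
  by apply: z_elt => //; exists (('Phi_n ^+ c) ^+ (b + j)); rewrite /G /F /g; ring.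
have [a2 e2] : pdvd (polyZR R F) (z G - z F).
  by apply: z_elt => //; exists ('Phi_m ^+ b); rewrite mulrC.
have [a3 e3] := zA F FA.
have zg : z g = (a3 + a2) * polyZR R F - a1 * polyZR R g.
  by rewrite mulrDl -e1 -e2 -e3; ring.
have EF : F = s * g + (p ^ j)%N%:R * (gA * t) by rewrite /F Est natrX /g; ring.
exists ((a3 + a2) * polyZR R s - a1), ((a3 + a2) * polyZR R (gA * t)).
by rewrite zg EF /polyZR rmorphD !rmorphM rmorph_nat; ring.
Qed.

Definition vanishing_ext (A A' : nat -> Prop) :=
  [/\ forall k, A k -> A' k, forall k, A' k -> S k & vanishes_on A'].

Lemma vanishing_ext_trans (A A' A'' : nat -> Prop) :
  vanishing_ext A A' -> vanishing_ext A' A'' -> vanishing_ext A A''.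
Proof. by move=> [AA' _ _] [A'A'' A''S zA'']; split=> // k /AA'/A'A''. Qed.

Lemma vanishes_on_chain (A : nat -> Prop) a b :
  (forall k, A k -> S k) -> vanishes_on A -> A a -> chain_in R S a b ->
  exists2 A' : nat -> Prop, vanishing_ext A A' & A' b.
Proof.
move=> AS zA Aa [r [ns [ns0 [<- [nsS ns_equiv]]]]].
elim: r nsS ns_equiv => [|r IHr] nsS ns_equiv; first by exists A; rewrite ?ns0.
have [A' AA' A'r] := IHr (fun i i_le_r => nsS i (leqW i_le_r))
  (fun i i_lt_r => ns_equiv i (ltnW i_lt_r)).
case: (ns_equiv r (ltnSn r)) => [<-|[p [e [p_pr [p_sep Er]]]]]; first by exists A'.
have [c [u [v Euv]]] := Cyclotomic_pow_in_ideal p_pr Er.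
have [_ A'S zA'] := AA'; exists (fun k => A' k \/ k = ns r.+1); last by right.
apply: vanishing_ext_trans AA' _; split=> [k|k [/A'S //|->]|]; first by left.
  exact: nsS.
exact: vanishes_on_adjoin A'S zA' A'r (nsS _ (leqnn _)) p_sep Euv.
Qed.

Lemma vanishes_on_chain_closure (A : nat -> Prop) :
  (forall k, A k -> S k) -> vanishes_on A ->
  (forall n, S n -> exists a, A a /\ chain_in R S a n) -> vanishes_on S.
Proof.
move=> AS zA chainsA _ [s [sS ->]].
suff [A' [_ _ zA'] sA'] : exists2 A' : nat -> Prop,
    vanishing_ext A A' & forall n, n \in s -> A' n by apply: zA'; exists s.
elim: s sS => [|n s IHs] sS; first by exists A.
have [|A' AA' sA'] := IHs; first by move=> k ks; apply: sS; rewrite inE ks orbT.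
have [a [Aa chain_an]] := chainsA n (sS n (mem_head n s)).
have [AA'_sub A'S zA'] := AA'.
have [A'' A'A'' A''n] := vanishes_on_chain A'S zA' (AA'_sub a Aa) chain_an.
exists A''; first exact: vanishing_ext_trans AA' A'A''.
by have [A'A''_sub _ _] := A'A''; move=> k; rewrite inE => /predU1P[->|/sA'/A'A''_sub].
Qed.

End VanishingCompatibleFamily.

Lemma rho_injective_of_chains (R : comNzRingType) (S S' : nat -> Prop) :
  (forall n, S' n -> S n) ->
  (forall n, S n -> exists n', S' n' /\ chain_in R S n' n) -> rho_injective R S S'.
Proof.
move=> S'S chains x y x_elt y_elt xy_eq'.
exact: (vanishes_on_chain_closure (cyc_elt_sub x_elt y_elt) S'S xy_eq' chains).
Qed.

Lemma rho_injective_connected (R : comNzRingType) (S S' : nat -> Prop) :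
  connectedR R S -> (forall n, S' n -> S n) -> (exists n, S' n) ->
  rho_injective R S S'.
Proof.
move=> [_ S_conn] S'S [n0 S'n0]; apply: rho_injective_of_chains => // n Sn.
by exists n0; split; last by apply: S_conn; first exact: S'S.
Qed.

Lemma equivR_sym (R : comNzRingType) a b : equivR R a b -> equivR R b a.
Proof.
by case=> [->|[p [k [p_pr [p_sep /or_comm Eab]]]]]; [left | right; exists p, k].
Qed.

Lemma chain_in_refl (R : comNzRingType) (S : nat -> Prop) a : S a -> chain_in R S a a.
Proof. by move=> Sa; exists 0%N, (fun _ => a). Qed.

Lemma chain_in_rcons (R : comNzRingType) (S : nat -> Prop) a b c :
  chain_in R S a b -> S c -> equivR R b c -> chain_in R S a c.
Proof.
move=> [r [ns [ns0 [nsr [nsS ns_equiv]]]]] Sc bc.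
exists r.+1, (fun i => if (i <= r)%N then ns i else c); rewrite /= ltnn.
split=> //; split=> //; split=> i; first by case: ifP => [/nsS|].
rewrite ltnS => i_le_r; rewrite i_le_r; case: ltnP => [/ns_equiv //|r_le_i].
suff -> : i = r by rewrite nsr.
by apply/eqP; rewrite eqn_leq i_le_r.
Qed.

Lemma chain_in_trans (R : comNzRingType) (S : nat -> Prop) a b c :
  chain_in R S a b -> chain_in R S b c -> chain_in R S a c.
Proof.
move=> chain_ab [r [ns [ns0 [<- [nsS ns_equiv]]]]].
elim: r nsS ns_equiv => [|r IHr] nsS ns_equiv; first by rewrite ns0.
apply: chain_in_rcons (nsS _ (leqnn _)) (ns_equiv _ (ltnSn _)).
apply: IHr => [i /leqW/nsS //|i /ltnW/ns_equiv //].
Qed.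

Lemma chain_in_sym (R : comNzRingType) (S : nat -> Prop) a b :
  chain_in R S a b -> chain_in R S b a.
Proof.
move=> [r [ns [ns0 [nsr [nsS ns_equiv]]]]].
exists r, (fun i => ns (r - i)%N); rewrite subn0 subnn.
split=> //; split=> //; split=> [i _|i i_lt_r]; first by apply: nsS; rewrite leq_subr.
have -> : (r - i = (r - i.+1).+1)%N by rewrite subnSK.
by apply/equivR_sym/ns_equiv; rewrite ltn_subrL (leq_ltn_trans _ i_lt_r).
Qed.

Section AllPrimesSeparated.

Variable R : comNzRingType.
Hypothesis R_sep : forall p, prime p -> padic_separated R p.

Lemma chain_in_from1 n : (0 < n)%N -> chain_in R (fun k => (0 < k)%N) 1 n.
Proof.
elim/ltn_ind: n => n IHn n_gt0; have [n_gt1|n_le1] := ltnP 1 n; last first.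
  suff -> : n = 1%N by apply: chain_in_refl.
  by apply/eqP; rewrite eqn_leq n_le1.
have p_pr := pdiv_prime n_gt1; have p_n := pdiv_dvd n.
have m_gt0 : (0 < n %/ pdiv n)%N by rewrite divn_gt0 ?prime_gt0 // dvdn_leq.
apply: chain_in_rcons (IHn _ _ m_gt0) n_gt0 _.
  exact: ltn_Pdiv (prime_gt1 p_pr) (ltnW n_gt1).
right; exists (pdiv n), 1%N; rewrite expn1 divnK //.
by split=> //; split; [apply: R_sep | right].
Qed.

Lemma connectedR_pos : connectedR R (fun n => (0 < n)%N).
Proof.
split=> [|a b a_gt0 b_gt0]; first by exists 1%N.
exact: chain_in_trans (chain_in_sym (chain_in_from1 a_gt0)) (chain_in_from1 b_gt0).
Qed.

End AllPrimesSeparated.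

Lemma padic_separated_int p : (1 < p)%N -> padic_separated int p.
Proof.
move=> p_gt1 r r_div; have [s Er] := r_div `|r|%N.
apply/eqP; apply: contraT => r_neq0.
have s_neq0 : s != 0 by apply: contraNneq r_neq0 => s0; rewrite Er s0 mulr0.
have abs_r : (`|r| = p ^ `|r| * `|s|)%N by rewrite {1}Er abszM natz.
by move: (ltn_expl `|r|%N p_gt1); rewrite {1}abs_r ltnNge leq_pmulr ?absz_gt0.
Qed.

Theorem theorem4p2 :
  (forall (R : comNzRingType) (S S' : nat -> Prop),
      (forall n, S n -> (0 < n)%N) ->
      (forall n, S' n -> S n) ->
      (forall n, S n -> exists n', S' n' /\ chain_in R S n' n) ->
      rho_injective R S S') /\
  (forall (R : comNzRingType) (S S' : nat -> Prop),
      (forall n, S n -> (0 < n)%N) ->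
      connectedR R S ->
      (forall n, S' n -> S n) -> (exists n, S' n) ->
      rho_injective R S S') /\
  (forall S' : nat -> Prop,
      (forall n, S' n -> (0 < n)%N) -> (exists n, S' n) ->
      rho_injective int (fun n => (0 < n)%N) S').
Proof.
split; first by move=> R S S' _; apply: rho_injective_of_chains.
split; first by move=> R S S' _; apply: rho_injective_connected.
move=> S' S'_pos; apply: rho_injective_connected S'_pos.
by apply: connectedR_pos => p /prime_gt1; apply: padic_separated_int.
Qed.
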